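(* Let $a,b,c,d\in\mathbb{Q}$ satisfy $a^4+b^4+c^4+d^4=(a+b+c+d)^4$, with at least three of $a,b,c,d$ non-zero, and let $t=\frac{c^2+cd+d^2}{(a+c+d)(b+c+d)}$. Then $t\neq 1$ and $$\frac{t+1}{t-1}=\frac{a^2+ab+b^2}{(c+a+b)(d+a+b)}.$$
   Context: A solution of $a^4+b^4+c^4+d^4=(a+b+c+d)^4$ is called non-trivial if at least three of $a,b,c,d$ are non-zero. For a non-trivial solution the denominators $(a+c+d)(b+c+d)$ and $(c+a+b)(d+a+b)$ are non-zero. *)

From mathcomp Require Import all_boot all_order all_algebra.
Set Implicit Arguments. Unset Strict Implicit. Unset Printing Implicit Defensive.
Import Order.TTheory GRing.Theory Num.Theory.
Local Open Scope ring_scope.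

Definition nontrivial (a b c d : rat) : Prop :=
  (3 <= nat_of_bool (a != 0%R) + nat_of_bool (b != 0%R)
       + nat_of_bool (c != 0%R) + nat_of_bool (d != 0%R))%N.

From mathcomp Require Import all_boot all_order all_algebra.
From mathcomp Require Import ring lra.
Import Order.TTheory GRing.Theory Num.Theory.
Local Open Scope ring_scope.

(* With N = c^2+cd+d^2, X = (a+c+d)(b+c+d), M = a^2+ab+b^2, Y = (c+a+b)(d+a+b),
   the defect (a+b+c+d)^4 - (a^4+b^4+c^4+d^4) equals 2((N+X)Y - M(N-X)).  So on a
   solution (N+X)Y = M(N-X), which is the claim (t+1)/(t-1) = M/Y for t = N/X once
   X, Y and N-X are non-zero.  X and Y vanish only if a sum of three of the
   variables does, and then the equation forces a sum of three fourth powers to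
   vanish, i.e. three of the variables are zero. *)

Lemma fourth_power_defect {R : comPzRingType} (a b c d : R) :
  (a + b + c + d) ^+ 4 - (a ^+ 4 + b ^+ 4 + c ^+ 4 + d ^+ 4) =
  2 * (((c ^+ 2 + c * d + d ^+ 2) + (a + c + d) * (b + c + d)) * ((c + a + b) * (d + a + b))
       - (a ^+ 2 + a * b + b ^+ 2) * ((c ^+ 2 + c * d + d ^+ 2) - (a + c + d) * (b + c + d))).
Proof. ring. Qed.

Lemma fourth_power_eq_cross {R : numDomainType} (a b c d : R) :
  a ^+ 4 + b ^+ 4 + c ^+ 4 + d ^+ 4 = (a + b + c + d) ^+ 4 ->
  ((c ^+ 2 + c * d + d ^+ 2) + (a + c + d) * (b + c + d)) * ((c + a + b) * (d + a + b)) =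
  (a ^+ 2 + a * b + b ^+ 2) * ((c ^+ 2 + c * d + d ^+ 2) - (a + c + d) * (b + c + d)).
Proof.
move=> eq4; have := fourth_power_defect a b c d.
by rewrite -eq4 subrr => /esym/eqP; rewrite mulf_eq0 pnatr_eq0 subr_eq0 => /eqP.
Qed.

Lemma expr4_ge0 {R : realDomainType} (x : R) : 0 <= x ^+ 4.
Proof. by rewrite (_ : 4 = 2 * 2)%N // exprM sqr_ge0. Qed.

Lemma sum_fourth_powers_eq0 {R : realDomainType} (x y z : R) :
  x ^+ 4 + y ^+ 4 + z ^+ 4 = 0 -> [/\ x = 0, y = 0 & z = 0].
Proof.
move=> sum0; have [[hx hy] hz] := (expr4_ge0 x, expr4_ge0 y, expr4_ge0 z).
have /eqP : x ^+ 4 = 0 by lra.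
have /eqP : y ^+ 4 = 0 by lra.
have /eqP : z ^+ 4 = 0 by lra.
by rewrite !expf_eq0 /= => /eqP-> /eqP-> /eqP->.
Qed.

Lemma partial_sum_neq0 {R : realDomainType} (x y z w : R) :
  x ^+ 4 + y ^+ 4 + z ^+ 4 + w ^+ 4 = (x + y + z + w) ^+ 4 ->
  [|| x != 0, y != 0 | z != 0] -> x + y + z != 0.
Proof.
move=> eq4; apply: contraTneq => xyz0.
have /sum_fourth_powers_eq0[-> -> ->] : x ^+ 4 + y ^+ 4 + z ^+ 4 = 0.
  by move: eq4; rewrite xyz0 add0r => /eqP; rewrite -subr_eq0 addrK => /eqP.
by rewrite eqxx.
Qed.

Lemma nontrivial_triples (a b c d : rat) : nontrivial a b c d ->
  [/\ [|| a != 0, c != 0 | d != 0], [|| b != 0, c != 0 | d != 0],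
      [|| c != 0, a != 0 | b != 0] & [|| d != 0, a != 0 | b != 0]].
Proof.
by rewrite /nontrivial; case: (a != 0); case: (b != 0); case: (c != 0); case: (d != 0).
Qed.

Lemma ratio_add1_sub1 {F : numFieldType} (N X M Y : F) :
  X != 0 -> Y != 0 -> (N + X) * Y = M * (N - X) ->
  N / X != 1 /\ (N / X + 1) / (N / X - 1) = M / Y.
Proof.
move=> X0 Y0 cross; have NX0 : N - X != 0.
  apply: contra_eqN cross => /eqP NX; rewrite NX mulr0 (subr0_eq NX) -mulr2n.
  by rewrite mulrnAl mulrn_eq0 negb_or /= mulf_neq0.
split; first by rewrite -subr_eq0 -[1](divff X0) -mulrBl mulf_neq0 ?invr_eq0.
have -> : (N / X + 1) / (N / X - 1) = (N + X) / (N - X) by field; rewrite X0 NX0.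
by apply/eqP; rewrite eqr_div // cross.
Qed.

Theorem mainTheorem2 (a b c d : rat) :
  a ^+ 4 + b ^+ 4 + c ^+ 4 + d ^+ 4 = (a + b + c + d) ^+ 4 ->
  nontrivial a b c d ->
  let t := (c ^+ 2 + c * d + d ^+ 2) / ((a + c + d) * (b + c + d)) in
  t != 1 /\
  (t + 1) / (t - 1) = (a ^+ 2 + a * b + b ^+ 2) / ((c + a + b) * (d + a + b)).
Proof.
move=> eq4 /nontrivial_triples[acd bcd cab dab] t.
have eq4_perm (x y z w : rat) : x + y + z + w = a + b + c + d ->
    x ^+ 4 + y ^+ 4 + z ^+ 4 + w ^+ 4 = a ^+ 4 + b ^+ 4 + c ^+ 4 + d ^+ 4 ->
    x ^+ 4 + y ^+ 4 + z ^+ 4 + w ^+ 4 = (x + y + z + w) ^+ 4.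
  by move=> -> ->.
have acd0 : a + c + d != 0 by apply: (partial_sum_neq0 _ _ _ b) => //; apply: eq4_perm; ring.
have bcd0 : b + c + d != 0 by apply: (partial_sum_neq0 _ _ _ a) => //; apply: eq4_perm; ring.
have cab0 : c + a + b != 0 by apply: (partial_sum_neq0 _ _ _ d) => //; apply: eq4_perm; ring.
have dab0 : d + a + b != 0 by apply: (partial_sum_neq0 _ _ _ c) => //; apply: eq4_perm; ring.
apply: ratio_add1_sub1; [exact: mulf_neq0 | exact: mulf_neq0 | ].
exact: fourth_power_eq_cross.
Qed.
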